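(* Let $X$ be a Hilbert space with unit sphere $S_X$, let $C\subseteq X$ be a subset, and let $N:C\to S_X$ be a mapping. Then the following statements are equivalent. (1) There exists a $C^{1,1}$ convex body $V\subseteq X$ such that $C\subseteq \partial V$ and $N(x)$ is the outer unit normal to $\partial V$ at $x$ for every $x\in C$. (2) There exists some $r>0$ such that $$\langle N(y), y-x\rangle \geq \tfrac{r}{2}\|N(y)-N(x)\|^2 \quad\text{for all } x,y\in C.$$ Moreover, if (2) holds with a constant $r>0$, then the body $V$ in (1) can be chosen so that its outer unit normal $N_{\partial V}:\partial V\to S_X$ is $r^{-1}$-Lipschitz. In addition, if $C$ is bounded, then $V$ can be taken to be bounded as well.
   Context: A convex body in $X$ is a closed convex set with nonempty interior; convex bodies are allowed to be unbounded. A convex body $V$ is of class $C^{1,1}$ if $\partial V$ is a $C^1$ submanifold (so that the outer unit normal $N_{\partial V}:\partial V\to S_X$ is well defined and continuous) and $N_{\partial V}$ is Lipschitz with respect to the ambient norm, i.e. there is $L>0$ with $\|N_{\partial V}(x)-N_{\partial V}(y)\|\le L\|x-y\|$ for all $x,y\in\partial V$. *)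

From Stdlib Require Import Reals.
Open Scope R_scope.

Record Hilbert := {
  hcar :> Type;
  hadd : hcar -> hcar -> hcar;
  hzero : hcar;
  hopp : hcar -> hcar;
  hscal : R -> hcar -> hcar;
  hinner : hcar -> hcar -> R;
  hadd_assoc : forall x y z, hadd x (hadd y z) = hadd (hadd x y) z;
  hadd_comm : forall x y, hadd x y = hadd y x;
  hadd_0 : forall x, hadd x hzero = x;
  hadd_opp : forall x, hadd x (hopp x) = hzero;
  hscal_assoc : forall a b x, hscal a (hscal b x) = hscal (a * b) x;
  hscal_1 : forall x, hscal 1 x = x;
  hscal_distr_l : forall a x y, hscal a (hadd x y) = hadd (hscal a x) (hscal a y);
  hscal_distr_r : forall a b x, hscal (a + b) x = hadd (hscal a x) (hscal b x);
  hinner_sym : forall x y, hinner x y = hinner y x;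
  hinner_add_l : forall x y z, hinner (hadd x y) z = hinner x z + hinner y z;
  hinner_scal_l : forall a x y, hinner (hscal a x) y = a * hinner x y;
  hinner_pos : forall x, 0 <= hinner x x;
  hinner_def : forall x, hinner x x = 0 -> x = hzero;
  hcomplete : forall u : nat -> hcar,
    (forall eps, 0 < eps -> exists N, forall m n, (N <= m)%nat -> (N <= n)%nat ->
        sqrt (hinner (hadd (u m) (hopp (u n))) (hadd (u m) (hopp (u n)))) < eps) ->
    exists l, forall eps, 0 < eps -> exists N, forall n, (N <= n)%nat ->
        sqrt (hinner (hadd (u n) (hopp l)) (hadd (u n) (hopp l))) < eps
}.

Arguments hadd {h}. Arguments hzero {h}. Arguments hopp {h}.
Arguments hscal {h}. Arguments hinner {h}.

Section Geometry.
Variable X : Hilbert.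

Definition hsub (x y : X) : X := hadd x (hopp y).
Definition hnorm (x : X) : R := sqrt (hinner x x).
Definition hdist (x y : X) : R := hnorm (hsub x y).

Definition interior (V : X -> Prop) (x : X) : Prop :=
  exists eps, 0 < eps /\ forall y, hdist y x < eps -> V y.
Definition closure (V : X -> Prop) (x : X) : Prop :=
  forall eps, 0 < eps -> exists y, V y /\ hdist y x < eps.
Definition is_closed (V : X -> Prop) : Prop :=
  forall x, closure V x -> V x.
Definition boundary (V : X -> Prop) (x : X) : Prop :=
  closure V x /\ ~ interior V x.
Definition hbounded (V : X -> Prop) : Prop :=
  exists M, forall x, V x -> hnorm x <= M.

Definition convex (V : X -> Prop) : Prop :=
  forall x y t, V x -> V y -> 0 <= t <= 1 ->
    V (hadd (hscal t x) (hscal (1 - t) y)).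
Definition convex_body (V : X -> Prop) : Prop :=
  convex V /\ is_closed V /\ exists x, interior V x.

Definition frechet_grad (g : X -> R) (v p : X) : Prop :=
  forall eps, 0 < eps -> exists delta, 0 < delta /\
    forall q, hdist q p < delta ->
      Rabs (g q - g p - hinner v (hsub q p)) <= eps * hdist q p.

Definition local_chart (S : X -> Prop) (p : X) (delta : R) (g : X -> R) (G : X -> X) : Prop :=
  0 < delta /\
  (forall q, hdist q p < delta ->
     frechet_grad g (G q) q /\
     (forall eps, 0 < eps -> exists eta, 0 < eta /\
        forall q', hdist q' q < eta -> hdist (G q') (G q) < eps)) /\
  G p <> hzero /\
  (forall q, hdist q p < delta -> (S q <-> g q = 0)).

Definition C1_hypersurface (S : X -> Prop) : Prop :=
  forall p, S p -> exists delta g G, local_chart S p delta g G.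

(* n is the outer unit normal to the boundary of V at x:
   a unit vector normal to the tangent hyperplane of the boundary at x
   (i.e. parallel to the gradient of a local defining function), pointing
   out of V. *)
Definition outer_unit_normal (V : X -> Prop) (x n : X) : Prop :=
  hnorm n = 1 /\
  (exists delta g G, local_chart (boundary V) x delta g G /\
     (n = hscal (/ hnorm (G x)) (G x) \/ n = hscal (- / hnorm (G x)) (G x))) /\
  (exists t0, 0 < t0 /\ forall t, 0 < t < t0 -> ~ V (hadd x (hscal t n))).

Definition normal_field (V : X -> Prop) (NV : X -> X) : Prop :=
  forall x, boundary V x -> outer_unit_normal V x (NV x).

Definition lipschitz_on (S : X -> Prop) (f : X -> X) (L : R) : Prop :=
  forall x y, S x -> S y -> hdist (f x) (f y) <= L * hdist x y.

Definition C11_body (V : X -> Prop) : Prop :=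
  convex_body V /\ C1_hypersurface (boundary V) /\
  exists NV L, 0 < L /\ normal_field V NV /\ lipschitz_on (boundary V) NV L.

End Geometry.

Arguments hsub {X}. Arguments hnorm {X}. Arguments hdist {X}.
Arguments interior {X}. Arguments closure {X}. Arguments is_closed {X}.
Arguments boundary {X}. Arguments hbounded {X}. Arguments convex {X}.
Arguments convex_body {X}. Arguments frechet_grad {X}. Arguments local_chart {X}.
Arguments C1_hypersurface {X}. Arguments outer_unit_normal {X}.
Arguments normal_field {X}. Arguments lipschitz_on {X}. Arguments C11_body {X}.

(* If the normal field of V is L-Lipschitz, then at every
   boundary point x the ball of radius r = 1/(2L) tangent at x from inside lies
   in V ([inner_ball]); at every boundary point y, the outer normal supports V
   ([supporting]).  Testing the supporting half-space at y on the inner ball at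
   x gives inequality (2) ([tangent_ball_inequality]).

   Let W be the closed convex hull of the centres
   y - r N y and P the metric projection onto W.  The parallel body
   V = {z | d(z, W) <= r} is a C^{1,1} convex body: its boundary is the level set
   d(., W) = r, defined by the C^1 function |z - P z|^2 - r^2, and its normal
   (z - P z)/r is 1/r-Lipschitz because z |-> z - P z is nonexpansive.
   Inequality (2) puts W in the half-space <N x, . - (x - r N x)> <= 0, so
   P x = x - r N x: each x in C is on the boundary with outer normal N x. *)

From Pilot Require Import Defs.
From Stdlib Require Import Reals Lra Psatz Classical ClassicalEpsilon.
Open Scope R_scope.
(* The Stdlib reals also export a (different) [interior]; use the one of Defs. *)
Local Notation interior := (@Defs.interior _).

Section InnerProduct.
Context {X : Hilbert}.

Lemma inner_addr (x y z : X) : hinner x (hadd y z) = hinner x y + hinner x z.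
Proof. rewrite hinner_sym, hinner_add_l, (hinner_sym _ y), (hinner_sym _ z); ring. Qed.

Lemma inner_scalr a (x y : X) : hinner x (hscal a y) = a * hinner x y.
Proof. rewrite hinner_sym, hinner_scal_l, hinner_sym; ring. Qed.

Lemma inner_zerol (y : X) : hinner hzero y = 0.
Proof. assert (H := hinner_add_l X hzero hzero y). rewrite hadd_0 in H. lra. Qed.

Lemma inner_zeror (y : X) : hinner y hzero = 0.
Proof. rewrite hinner_sym; apply inner_zerol. Qed.

Lemma inner_oppl (x y : X) : hinner (hopp x) y = - hinner x y.
Proof.
  assert (H := hinner_add_l X x (hopp x) y). rewrite hadd_opp, inner_zerol in H. lra.
Qed.

Lemma inner_oppr (x y : X) : hinner y (hopp x) = - hinner y x.
Proof. rewrite hinner_sym, inner_oppl, hinner_sym; ring. Qed.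

Lemma inner_subl (x y z : X) : hinner (hsub x y) z = hinner x z - hinner y z.
Proof. unfold hsub. rewrite hinner_add_l, inner_oppl; ring. Qed.

Lemma inner_subr (x y z : X) : hinner z (hsub x y) = hinner z x - hinner z y.
Proof. unfold hsub. rewrite inner_addr, inner_oppr; ring. Qed.

(* Vectors are determined by their inner products; this turns every vector
   identity into a real-number identity. *)
Lemma vec_ext (u v : X) : (forall w, hinner u w = hinner v w) -> u = v.
Proof.
  intro H. assert (Hd : hsub u v = hzero).
  { apply hinner_def. rewrite inner_subl, !H. ring. }
  unfold hsub in Hd.
  rewrite <- (hadd_0 X u), <- (hadd_opp X v), (hadd_comm X v), hadd_assoc, Hd,
    hadd_comm, hadd_0. reflexivity.
Qed.

End InnerProduct.

Create HintDb inner.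
#[export] Hint Rewrite @hinner_add_l @inner_addr @hinner_scal_l @inner_scalr
  @inner_zerol @inner_zeror @inner_oppl @inner_oppr @inner_subl @inner_subr : inner.

Ltac expand_inner := autorewrite with inner.
Ltac expand_inner_in H := autorewrite with inner in H.
Ltac vec_eq := apply vec_ext; intro; expand_inner; try unfold Rdiv; ring.

Lemma Rabs_le_inv a b : Rabs a <= b -> - b <= a <= b.
Proof. intro H. assert (A := Rle_abs a). assert (B := Rle_abs (- a)). rewrite Rabs_Ropp in B. lra. Qed.

Lemma small_step a b c d : 0 < a -> 0 < b -> 0 < c -> 0 < d ->
  exists t, 0 < t <= 1 /\ t * a < b /\ t * c < d.
Proof.
  intros Ha Hb Hc Hd. exists (Rmin 1 (Rmin (b / (2 * a)) (d / (2 * c)))).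
  assert (H1 := Rmin_l 1 (Rmin (b / (2 * a)) (d / (2 * c)))).
  assert (H2 := Rmin_r 1 (Rmin (b / (2 * a)) (d / (2 * c)))).
  assert (H3 := Rmin_l (b / (2 * a)) (d / (2 * c))).
  assert (H4 := Rmin_r (b / (2 * a)) (d / (2 * c))).
  set (t := Rmin 1 (Rmin (b / (2 * a)) (d / (2 * c)))) in *.
  assert (Ht : 0 < t) by (unfold t; repeat apply Rmin_pos; try lra; apply Rdiv_lt_0_compat; lra).
  split; [lra| split].
  - apply Rle_lt_trans with (b / (2 * a) * a); [apply Rmult_le_compat_r; lra|].
    replace (b / (2 * a) * a) with (b / 2) by (field; lra). lra.
  - apply Rle_lt_trans with (d / (2 * c) * c); [apply Rmult_le_compat_r; lra|].
    replace (d / (2 * c) * c) with (d / 2) by (field; lra). lra.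
Qed.

Section Norm.
Context {X : Hilbert}.

Lemma hnorm_nonneg (x : X) : 0 <= hnorm x.
Proof. apply sqrt_pos. Qed.

Lemma hnorm_sq (x : X) : hnorm x * hnorm x = hinner x x.
Proof. unfold hnorm. apply sqrt_sqrt, hinner_pos. Qed.

Lemma hnorm_pow2 (x : X) : hnorm x ^ 2 = hinner x x.
Proof. rewrite <- hnorm_sq. ring. Qed.

Lemma hdist_nonneg (x y : X) : 0 <= hdist x y.
Proof. apply hnorm_nonneg. Qed.

Lemma norm_le_of_sq (x : X) c : 0 <= c -> hinner x x <= c * c -> hnorm x <= c.
Proof. intros Hc H. assert (A := hnorm_nonneg x). assert (B := hnorm_sq x). nra. Qed.

Lemma norm_lt_of_sq (x : X) c : 0 <= c -> hinner x x < c * c -> hnorm x < c.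
Proof. intros Hc H. assert (A := hnorm_nonneg x). assert (B := hnorm_sq x). nra. Qed.

Lemma sq_le_of_norm (x y : X) : hnorm x <= hnorm y -> hinner x x <= hinner y y.
Proof.
  intro H. assert (A := hnorm_nonneg x). assert (B := hnorm_sq x).
  assert (C := hnorm_sq y). nra.
Qed.

Lemma norm_eq_of_sq (x : X) c : 0 <= c -> hinner x x = c * c -> hnorm x = c.
Proof. intros Hc H. unfold hnorm. rewrite H. apply sqrt_square; auto. Qed.

Lemma norm_zero (x : X) : hnorm x = 0 -> x = hzero.
Proof. intro H. apply hinner_def. rewrite <- hnorm_sq, H. ring. Qed.

Lemma norm_hzero : hnorm (@hzero X) = 0.
Proof. unfold hnorm. rewrite inner_zerol. apply sqrt_0. Qed.

Lemma unit_inner (n : X) : hnorm n = 1 -> hinner n n = 1.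
Proof. intro H. rewrite <- hnorm_sq, H. ring. Qed.

Lemma inner_self_sub_zero (u v : X) : hinner (hsub u v) (hsub u v) = 0 -> u = v.
Proof.
  intro H. apply hinner_def in H. apply vec_ext. intro w.
  assert (E : hinner (hsub u v) w = 0) by (rewrite H; apply inner_zerol).
  expand_inner_in E. lra.
Qed.

Lemma cauchy_schwarz (x y : X) : Rabs (hinner x y) <= hnorm x * hnorm y.
Proof.
  assert (Hsq : hinner x y * hinner x y <= hinner x x * hinner y y).
  { destruct (Req_dec (hinner y y) 0) as [E|E].
    - apply hinner_def in E. subst y. rewrite !inner_zeror. lra.
    - (* expand 0 <= |x - (<x,y>/<y,y>) y|^2 *)
      assert (Hy : 0 < hinner y y) by (destruct (hinner_pos X y); lra).
      assert (P := hinner_pos X (hsub x (hscal (hinner x y / hinner y y) y))).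
      expand_inner_in P. rewrite (hinner_sym _ y x) in P.
      set (a := hinner x y) in *. set (b := hinner y y) in *.
      replace (hinner x x - a / b * a - (a / b * a - a / b * (a / b * b)))
        with ((hinner x x * b - a * a) / b) in P by (field; lra).
      apply Rmult_le_compat_r with (r := b) in P; [|lra].
      replace ((hinner x x * b - a * a) / b * b) with (hinner x x * b - a * a) in P
        by (field; lra). lra. }
  assert (Hx1 := hnorm_nonneg x). assert (Hy1 := hnorm_nonneg y).
  assert (Hpp : (hnorm x * hnorm y) * (hnorm x * hnorm y) = hinner x x * hinner y y)
    by (rewrite <- hnorm_sq, <- (hnorm_sq y); ring).
  assert (Hp : 0 <= hnorm x * hnorm y) by nra.
  apply Rabs_le. split; nra.
Qed.

Lemma cauchy_schwarz_le (x y : X) : hinner x y <= hnorm x * hnorm y.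
Proof. eapply Rle_trans; [apply Rle_abs| apply cauchy_schwarz]. Qed.

Lemma norm_triangle (x y : X) : hnorm (hadd x y) <= hnorm x + hnorm y.
Proof.
  assert (H := cauchy_schwarz_le x y). assert (Hx1 := hnorm_nonneg x).
  assert (Hx2 := hnorm_sq x). assert (Hy1 := hnorm_nonneg y). assert (Hy2 := hnorm_sq y).
  apply norm_le_of_sq; [lra|]. expand_inner. rewrite (hinner_sym _ y x). nra.
Qed.

Lemma norm_scal a (x : X) : hnorm (hscal a x) = Rabs a * hnorm x.
Proof.
  apply norm_eq_of_sq; [apply Rmult_le_pos; [apply Rabs_pos| apply hnorm_nonneg]|].
  expand_inner. rewrite <- hnorm_sq.
  replace (Rabs a * hnorm x * (Rabs a * hnorm x))
    with ((Rabs a * Rabs a) * (hnorm x * hnorm x)) by ring.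
  rewrite <- Rabs_mult, Rabs_right by nra. ring.
Qed.

Lemma norm_scal_nonneg a (x : X) : 0 <= a -> hnorm (hscal a x) = a * hnorm x.
Proof. intro Ha. rewrite norm_scal, Rabs_right; lra. Qed.

Lemma norm_opp (x : X) : hnorm (hopp x) = hnorm x.
Proof. unfold hnorm. expand_inner. f_equal. ring. Qed.

Lemma hdist_sym (x y : X) : hdist x y = hdist y x.
Proof. unfold hdist, hnorm. expand_inner. f_equal. ring. Qed.

Lemma hdist_self (x : X) : hdist x x = 0.
Proof. unfold hdist. replace (hsub x x) with (@hzero X) by vec_eq. apply norm_hzero. Qed.

Lemma hdist_triangle (x y z : X) : hdist x z <= hdist x y + hdist y z.
Proof.
  unfold hdist. replace (hsub x z) with (hadd (hsub x y) (hsub y z)) by vec_eq.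
  apply norm_triangle.
Qed.

Lemma norm_le_dist (z p : X) : hnorm z <= hdist z p + hnorm p.
Proof. unfold hdist. replace z with (hadd (hsub z p) p) at 1 by vec_eq. apply norm_triangle. Qed.

Lemma norm_convex_comb (a b : X) t : 0 <= t <= 1 ->
  hnorm (hadd (hscal t a) (hscal (1 - t) b)) <= t * hnorm a + (1 - t) * hnorm b.
Proof.
  intro Ht. eapply Rle_trans; [apply norm_triangle|]. rewrite !norm_scal_nonneg by lra. lra.
Qed.

End Norm.

Section Segments.
Context {X : Hilbert}.

Definition seg (a b : X) (l : R) : X := hadd a (hscal l (hsub b a)).

Lemma seg0 (a b : X) : seg a b 0 = a.
Proof. unfold seg; vec_eq. Qed.

Lemma seg1 (a b : X) : seg a b 1 = b.
Proof. unfold seg; vec_eq. Qed.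

Lemma seg_close (a b : X) l m e : 0 < e -> Rabs (l - m) < e / (hdist b a + 1) ->
  hdist (seg a b l) (seg a b m) < e.
Proof.
  intros He Hlm. unfold hdist at 1.
  replace (hsub (seg a b l) (seg a b m)) with (hscal (l - m) (hsub b a))
    by (unfold seg; vec_eq).
  rewrite norm_scal. fold (hdist b a) in *.
  assert (HK : 0 <= hdist b a) by apply hdist_nonneg. revert HK Hlm.
  generalize (hdist b a). intros K HK Hlm.
  apply Rle_lt_trans with (e / (K + 1) * K).
  - apply Rmult_le_compat_r; lra.
  - apply Rmult_lt_reg_r with (K + 1); [lra|].
    replace (e / (K + 1) * K * (K + 1)) with (e * K) by (field; lra). nra.
Qed.

Lemma closure_self (V : X -> Prop) x : V x -> closure V x.
Proof. intros Hx e He. exists x. rewrite hdist_self. auto. Qed.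

Lemma boundary_in (V : X -> Prop) x : is_closed V -> boundary V x -> V x.
Proof. intros Hc [Hx _]. apply Hc, Hx. Qed.

(* A segment leaving a closed set crosses its boundary: the last parameter
   [s = sup {l in [0,1] | seg a b l in V}] gives a boundary point. *)
Lemma crossing (V : X -> Prop) (a b : X) :
  is_closed V -> V a -> ~ V b -> exists l, 0 <= l <= 1 /\ boundary V (seg a b l).
Proof.
  intros Hc Ha Hb.
  set (S := fun l => 0 <= l <= 1 /\ V (seg a b l)).
  assert (HS0 : S 0) by (split; [lra| rewrite seg0; auto]).
  destruct (completeness S) as [s [Hub Hlub]].
  { exists 1. intros l [Hl _]. lra. }
  { exists 0. exact HS0. }
  assert (Hs0 : 0 <= s) by (apply Hub, HS0).
  assert (Hs1 : s <= 1) by (apply Hlub; intros l [Hl _]; lra).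
  assert (HK : 0 <= hdist b a) by apply hdist_nonneg.
  assert (Hvs : V (seg a b s)).
  { apply Hc. intros e He.
    assert (Hd : 0 < e / (hdist b a + 1)) by (apply Rdiv_lt_0_compat; lra).
    destruct (classic (exists l, S l /\ s - e / (hdist b a + 1) < l)) as [[l [Hl Hsl]]|Hn].
    - exists (seg a b l). split; [apply Hl|]. apply seg_close; auto.
      assert (l <= s) by (apply Hub, Hl). rewrite Rabs_left1; lra.
    - exfalso. assert (s <= s - e / (hdist b a + 1)); [|lra].
      apply Hlub. intros l Hl. apply Rnot_lt_le. intro Hlt. apply Hn. eauto. }
  assert (Hs1' : s < 1).
  { destruct Hs1 as [|E]; auto. subst s. rewrite seg1 in Hvs. tauto. }
  exists s. split; [lra|]. split; [apply closure_self; auto|].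
  intros [e [He Hint]].
  set (h := Rmin (1 - s) (e / (2 * (hdist b a + 1)))).
  assert (Hh0 : 0 < h) by (apply Rmin_pos; [lra| apply Rdiv_lt_0_compat; lra]).
  assert (Hh1 : h <= 1 - s) by apply Rmin_l.
  assert (Hh2 : h <= e / (2 * (hdist b a + 1))) by apply Rmin_r.
  assert (Hhe : h < e / (hdist b a + 1)).
  { eapply Rle_lt_trans; [exact Hh2|]. unfold Rdiv.
    apply Rmult_lt_compat_l; [lra|]. apply Rinv_lt_contravar; nra. }
  assert (S (s + h)).
  { split; [lra|]. apply Hint. apply seg_close; auto.
    replace (s + h - s) with h by ring. rewrite Rabs_right; lra. }
  assert (s + h <= s) by (apply Hub; auto). lra.
Qed.

End Segments.

Section ConvexBodies.
Context {X : Hilbert}.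

Lemma norm_pos_of_neq (v : X) : v <> hzero -> 0 < hnorm v.
Proof.
  intro Hv. destruct (hnorm_nonneg v) as [H|H]; auto. exfalso. apply Hv, norm_zero. auto.
Qed.

(* This is the only use of
   the local defining function in the definition of [outer_unit_normal]. *)
Lemma outer_normal_tangent (V : X -> Prop) x n :
  boundary V x -> outer_unit_normal V x n ->
  forall eps, 0 < eps -> exists d, 0 < d /\ forall q, boundary V q -> hdist q x < d ->
    Rabs (hinner n (hsub q x)) <= eps * hdist q x.
Proof.
  intros Hbx [_ [[delta [g [G [[Hd [Hloc [HG0 Hzero]]] Hsign]]]] _]] eps Heps.
  assert (HGn := norm_pos_of_neq _ HG0).
  assert (Hxx : hdist x x < delta) by (rewrite hdist_self; lra).
  assert (Hgx : g x = 0) by (apply (Hzero x Hxx); auto).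
  destruct (proj1 (Hloc x Hxx) (eps * hnorm (G x))) as [d1 [Hd1 Hfr]]; [nra|].
  exists (Rmin d1 delta). split; [apply Rmin_pos; lra|]. intros q Hbq Hq.
  assert (Hq1 : hdist q x < d1) by (eapply Rlt_le_trans; [exact Hq| apply Rmin_l]).
  assert (Hq2 : hdist q x < delta) by (eapply Rlt_le_trans; [exact Hq| apply Rmin_r]).
  assert (Hgq : g q = 0) by (apply (Hzero q Hq2); auto).
  specialize (Hfr q Hq1). rewrite Hgq, Hgx in Hfr.
  replace (0 - 0 - hinner (G x) (hsub q x)) with (- hinner (G x) (hsub q x)) in Hfr by ring.
  rewrite Rabs_Ropp in Hfr.
  (* [n = ± G x / |G x|], so [|<n, v>| = |<G x, v>| / |G x|] *)
  assert (E : Rabs (hinner n (hsub q x)) * hnorm (G x) = Rabs (hinner (G x) (hsub q x))).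
  { destruct Hsign as [-> | ->]; rewrite hinner_scal_l, Rabs_mult;
      [| rewrite Rabs_Ropp]; rewrite Rabs_right by (apply Rle_ge, Rlt_le, Rinv_0_lt_compat; lra);
      field; lra. }
  apply Rmult_le_reg_r with (hnorm (G x)); [lra|]. nra.
Qed.

(* Otherwise the segment from [x] towards [z] and the outward ray [x + s n]
   would produce boundary points [q] with [<n, q - x>] comparable to
   [|q - x|], contradicting tangency. *)
Lemma supporting (V : X -> Prop) x n : convex V -> is_closed V ->
  boundary V x -> outer_unit_normal V x n -> forall z, V z -> hinner n (hsub z x) <= 0.
Proof.
  intros Hcv Hcl Hbx Hnx z Hz.
  assert (Htan := outer_normal_tangent V x n Hbx Hnx).
  destruct Hnx as [Hn1 [_ [t0 [Ht0 Hout]]]].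
  assert (Hx : V x) by (apply boundary_in; auto).
  apply Rnot_lt_le. intro Hc. set (c := hinner n (hsub z x)) in *.
  set (K := hnorm (hsub z x)).
  assert (HcK : c <= K) by (assert (H := cauchy_schwarz_le n (hsub z x)); rewrite Hn1 in H; fold c K in H; lra).
  destruct (Htan (c / (2 * K))) as [d [Hd Hq]]; [apply Rdiv_lt_0_compat; lra|].
  (* a step [t] small enough for the tangency estimate and the outward ray *)
  destruct (small_step K d c t0) as [t [[Ht0' Ht1] [Ht2 Ht3]]]; try lra.
  set (q0 := hadd (hscal t z) (hscal (1 - t) x)).
  assert (Hq0 : V q0) by (apply Hcv; auto; lra).
  set (q1 := hadd x (hscal (t * c) n)).
  assert (Hq1 : ~ V q1) by (apply Hout; split; nra).
  destruct (crossing V q0 q1 Hcl Hq0 Hq1) as [l [Hl Hbq]].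
  set (q := seg q0 q1 l) in *.
  assert (Eq : hsub q x = hadd (hscal ((1 - l) * t) (hsub z x)) (hscal (l * (t * c)) n))
    by (unfold q, seg, q0, q1; vec_eq).
  assert (Hnq : hinner n (hsub q x) = t * c).
  { rewrite Eq. expand_inner. rewrite (unit_inner n Hn1). unfold c. expand_inner. ring. }
  assert (Hqx : hdist q x <= t * K).
  { unfold hdist. rewrite Eq. eapply Rle_trans; [apply norm_triangle|].
    rewrite !norm_scal_nonneg, Hn1 by (apply Rmult_le_pos; nra). fold K.
    assert (0 <= l * t * (K - c)) by (apply Rmult_le_pos; nra). nra. }
  specialize (Hq q Hbq ltac:(lra)). rewrite Hnq, Rabs_right in Hq by nra.
  assert (c / (2 * K) * hdist q x <= c / (2 * K) * (t * K))
    by (apply Rmult_le_compat_l; [apply Rlt_le, Rdiv_lt_0_compat|]; lra).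
  replace (c / (2 * K) * (t * K)) with (t * c / 2) in H by (field; lra).
  nra.
Qed.

(* A supporting unit normal [u] at [x] coincides with any unit vector [m]
   such that the ball of radius [rho] tangent to [x] in direction [-m] lies
   in [V]: otherwise the ball would stick out of the half-space [<u, . - x> <= 0]. *)
Lemma normal_unique_of_inner_ball (V : X -> Prop) x u m rho :
  hnorm u = 1 -> hnorm m = 1 -> 0 < rho ->
  (forall z, V z -> hinner u (hsub z x) <= 0) ->
  (forall z, hdist z (hsub x (hscal rho m)) < rho -> V z) -> u = m.
Proof.
  intros Hu Hm Hr Hs Hb.
  assert (Huu := unit_inner u Hu). assert (Hmm := unit_inner m Hm).
  set (a := hinner u m).
  assert (Ha1 : -1 <= a).
  { assert (H := Rabs_le_inv _ _ (cauchy_schwarz u m)). rewrite Hu, Hm in H. fold a in H. lra. }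
  assert (Hge : 1 <= a).
  { apply Rnot_lt_le. intro Hlt.
    set (s := rho * (1 + a) / 2).
    assert (Hs0 : 0 <= s < rho) by (unfold s; split; nra).
    set (z := hadd (hsub x (hscal rho m)) (hscal s u)).
    assert (Hz : V z).
    { apply Hb. unfold hdist.
      replace (hsub z (hsub x (hscal rho m))) with (hscal s u) by (unfold z; vec_eq).
      rewrite norm_scal_nonneg, Hu; lra. }
    specialize (Hs z Hz). unfold z in Hs. expand_inner_in Hs. rewrite Huu in Hs.
    fold a in Hs. unfold s in Hs. nra. }
  apply inner_self_sub_zero. expand_inner. rewrite Huu, Hmm, (hinner_sym _ m u). fold a.
  assert (H := hinner_pos X (hsub u m)). expand_inner_in H.
  rewrite Huu, Hmm, (hinner_sym _ m u) in H. fold a in H. lra.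
Qed.

Section InnerBall.
Variables (V : X -> Prop) (NV : X -> X) (L : R).
Hypotheses (Hcv : convex V) (Hcl : is_closed V) (Hnf : normal_field V NV)
  (Hlip : lipschitz_on (boundary V) NV L) (HL : 0 < L).

(* Combining the supporting inequality at [w] with the Lipschitz bound on the
   normal: boundary points [w] lie above a paraboloid of opening [L] at [x]. *)
Lemma normal_quadratic_bound x w : boundary V x -> boundary V w ->
  hinner (NV x) (hsub x w) <= L * (hdist x w * hdist x w).
Proof.
  intros Hbx Hbw.
  assert (Sw := supporting V w (NV w) Hcv Hcl Hbw (Hnf w Hbw) x (boundary_in V x Hcl Hbx)).
  assert (Lp := Hlip x w Hbx Hbw).
  assert (CS := cauchy_schwarz_le (hsub (NV x) (NV w)) (hsub x w)).
  fold (hdist (NV x) (NV w)) (hdist x w) in CS.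
  replace (hinner (NV x) (hsub x w))
    with (hinner (hsub (NV x) (NV w)) (hsub x w) + hinner (NV w) (hsub x w))
    by (rewrite inner_subl; ring).
  assert (0 <= hdist x w) by apply hdist_nonneg.
  assert (hdist (NV x) (NV w) * hdist x w <= L * hdist x w * hdist x w)
    by (apply Rmult_le_compat_r; lra).
  lra.
Qed.

Lemma boundary_avoids_inner_ball x w : boundary V x -> boundary V w ->
  ~ hdist w (hsub x (hscal (/ (2 * L)) (NV x))) < / (2 * L).
Proof.
  intros Hbx Hbw Hlt. set (rho := / (2 * L)) in *.
  assert (Hrho : 2 * rho * L = 1) by (unfold rho; field; lra).
  assert (Hrho0 : 0 < rho) by (unfold rho; apply Rinv_0_lt_compat; lra).
  assert (Hnn := unit_inner _ (proj1 (Hnf x Hbx))).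
  assert (Q := normal_quadratic_bound x w Hbx Hbw).
  unfold hdist in Q. rewrite hnorm_sq in Q.
  set (a := hsub w x). set (n := NV x) in *.
  replace (hsub x w) with (hscal (-1) a) in Q by (unfold a; vec_eq).
  expand_inner_in Q.
  assert (Hsq : hinner (hadd a (hscal rho n)) (hadd a (hscal rho n)) < rho * rho).
  { replace (hadd a (hscal rho n)) with (hsub w (hsub x (hscal rho n))) by (unfold a; vec_eq).
    assert (H1 := hnorm_nonneg (hsub w (hsub x (hscal rho n)))).
    rewrite <- hnorm_sq. unfold hdist in Hlt. nra. }
  expand_inner_in Hsq. rewrite Hnn, (hinner_sym _ a n) in Hsq.
  assert (Q2 : 2 * rho * (- hinner n a) <= 2 * rho * (L * hinner a a))
    by (apply Rmult_le_compat_l; lra).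
  replace (2 * rho * (L * hinner a a)) with ((2 * rho * L) * hinner a a) in Q2 by ring.
  rewrite Hrho in Q2.
  lra.
Qed.

(* Some point of [V] lies in that ball: move from [x] a little towards an
   interior point [p], which lies strictly below the supporting hyperplane. *)
Lemma inner_ball_meets_body x : (exists p, interior V p) -> boundary V x ->
  exists q, V q /\ hdist q (hsub x (hscal (/ (2 * L)) (NV x))) < / (2 * L).
Proof.
  intros [p [dl [Hdl Hp]]] Hbx. set (rho := / (2 * L)).
  assert (Hrho0 : 0 < rho) by (unfold rho; apply Rinv_0_lt_compat; lra).
  set (n := NV x). assert (Hn1 : hnorm n = 1) by apply (Hnf x Hbx).
  assert (Hnn := unit_inner n Hn1).
  assert (Hx : V x) by (apply boundary_in; auto).
  assert (Hp1 : V (hadd p (hscal (dl / 2) n))).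
  { apply Hp. unfold hdist. replace (hsub (hadd p (hscal (dl / 2) n)) p) with (hscal (dl / 2) n)
      by vec_eq. rewrite norm_scal_nonneg, Hn1; lra. }
  assert (Hs := supporting V x n Hcv Hcl Hbx (Hnf x Hbx) _ Hp1).
  expand_inner_in Hs. rewrite Hnn in Hs.
  set (b := hsub p x). set (K := hinner b b). assert (HK : 0 <= K) by apply hinner_pos.
  assert (Hnb : hinner n b <= - (dl / 2)) by (unfold b; expand_inner; lra).
  destruct (small_step (K + 1) (rho * dl) 1 1) as [t [[Ht0 Ht1] [HtK _]]]; try nra.
  exists (hadd (hscal t p) (hscal (1 - t) x)). split.
  - apply Hcv; [apply Hp; rewrite hdist_self| |]; auto; lra.
  - unfold hdist. apply norm_lt_of_sq; [lra|].
    replace (hsub (hadd (hscal t p) (hscal (1 - t) x)) (hsub x (hscal rho n)))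
      with (hadd (hscal t b) (hscal rho n)) by (unfold b; vec_eq).
    expand_inner. rewrite Hnn, (hinner_sym _ b n). fold K.
    assert (t * (t * K) < t * (rho * dl)) by (apply Rmult_lt_compat_l; nra).
    assert (t * rho * hinner n b <= t * rho * (- (dl / 2))) by (apply Rmult_le_compat_l; nra).
    nra.
Qed.

(* A point of the ball outside [V] would
   give, by [crossing], a boundary point inside the ball. *)
Lemma inner_ball x : (exists p, interior V p) -> boundary V x ->
  forall z, hdist z (hsub x (hscal (/ (2 * L)) (NV x))) < / (2 * L) -> V z.
Proof.
  intros Hint Hbx z Hz. set (c := hsub x (hscal (/ (2 * L)) (NV x))) in *.
  destruct (inner_ball_meets_body x Hint Hbx) as [q [Hq Hqc]]. fold c in Hqc.
  apply NNPP. intro Hnz.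
  destruct (crossing V q z Hcl Hq Hnz) as [l [Hl Hbw]].
  apply (boundary_avoids_inner_ball x _ Hbx Hbw). fold c. unfold hdist.
  replace (hsub (seg q z l) c) with (hadd (hscal (1 - l) (hsub q c)) (hscal (1 - (1 - l)) (hsub z c)))
    by (unfold seg; vec_eq).
  eapply Rle_lt_trans; [apply norm_convex_comb; lra|].
  fold (hdist q c) (hdist z c).
  assert (Hm : Rmax (hdist q c) (hdist z c) < / (2 * L)) by (apply Rmax_lub_lt; auto).
  assert ((1 - l) * hdist q c <= (1 - l) * Rmax (hdist q c) (hdist z c))
    by (apply Rmult_le_compat_l; [lra| apply Rmax_l]).
  assert ((1 - (1 - l)) * hdist z c <= (1 - (1 - l)) * Rmax (hdist q c) (hdist z c))
    by (apply Rmult_le_compat_l; [lra| apply Rmax_r]).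
  lra.
Qed.

End InnerBall.


Lemma le_of_forall_lt_one a r : 0 < r -> (forall t, 0 <= t < 1 -> a + t * r <= 0) -> a + r <= 0.
Proof.
  intros Hr Hall. apply Rnot_lt_le. intro Hlt.
  destruct (small_step r (a + r) 1 1) as [e [He [Her _]]]; try lra.
  assert (H := Hall (1 - e) ltac:(lra)). lra.
Qed.

(* The key inequality of (2), for a ball of radius [r] tangent at [x] with
   inner direction [-m x], contained in the half-space supported at [y] with
   normal [m y]: testing the half-space on the points [x - r m x + t r m y]
   of the ball gives [<m y, x - y> + r (1 - <m y, m x>) <= 0]. *)
Lemma tangent_ball_inequality (V : X -> Prop) (m : X -> X) r x y :
  0 < r -> hnorm (m x) = 1 -> hnorm (m y) = 1 ->
  (forall z, V z -> hinner (m y) (hsub z y) <= 0) ->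
  (forall z, hdist z (hsub x (hscal r (m x))) < r -> V z) ->
  hinner (m y) (hsub y x) >= r / 2 * hnorm (hsub (m y) (m x)) ^ 2.
Proof.
  intros Hr Hx1 Hy1 Hsupp Hball.
  assert (Hxx := unit_inner _ Hx1). assert (Hyy := unit_inner _ Hy1).
  set (a := hinner (m y) (hsub x y) - r * hinner (m y) (m x)).
  assert (Ha : a + r <= 0).
  { apply le_of_forall_lt_one; auto. intros t Ht.
    set (z := hadd (hsub x (hscal r (m x))) (hscal (t * r) (m y))).
    assert (Hz : V z).
    { apply Hball. unfold hdist.
      replace (hsub z (hsub x (hscal r (m x)))) with (hscal (t * r) (m y)) by (unfold z; vec_eq).
      rewrite norm_scal_nonneg, Hy1; nra. }
    assert (S := Hsupp z Hz). unfold z in S. expand_inner_in S. rewrite Hyy in S.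
    unfold a. expand_inner. lra. }
  rewrite hnorm_pow2. expand_inner. rewrite Hxx, Hyy, (hinner_sym _ (m x) (m y)).
  unfold a in Ha. expand_inner_in Ha. lra.
Qed.

Lemma necessity (C : X -> Prop) (N : X -> X) :
  (exists V : X -> Prop, C11_body V /\
      (forall x, C x -> boundary V x /\ outer_unit_normal V x (N x))) ->
  exists r, 0 < r /\ forall x y, C x -> C y ->
      hinner (N y) (hsub y x) >= r / 2 * (hnorm (hsub (N y) (N x))) ^ 2.
Proof.
  intros [V [[[Hcv [Hcl Hint]] [_ [NV [L [HL [Hnf Hlip]]]]]] HC]].
  set (r := / (2 * L)). assert (Hr : 0 < r) by (unfold r; apply Rinv_0_lt_compat; lra).
  assert (Hball := inner_ball V NV L Hcv Hcl Hnf Hlip HL).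
  assert (HNV : forall x, C x -> N x = NV x).
  { intros x Hx. destruct (HC x Hx) as [Hb Hn].
    apply (normal_unique_of_inner_ball V x (N x) (NV x) r (proj1 Hn) (proj1 (Hnf x Hb)) Hr).
    - apply supporting; auto.
    - apply Hball; auto. }
  exists r. split; auto. intros x y Hx Hy.
  destruct (HC x Hx) as [Hbx Hnx]. destruct (HC y Hy) as [Hby Hny].
  apply (tangent_ball_inequality V N); auto.
  - exact (proj1 Hnx).
  - exact (proj1 Hny).
  - apply supporting; auto.
  - rewrite HNV by auto. apply Hball; auto.
Qed.

End ConvexBodies.

Section Projection.
Context {X : Hilbert}.

Definition cauchy_seq (u : nat -> X) : Prop :=
  forall eps, 0 < eps -> exists N, forall m n, (N <= m)%nat -> (N <= n)%nat ->
    hdist (u m) (u n) < eps.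
Definition seq_limit (u : nat -> X) (l : X) : Prop :=
  forall eps, 0 < eps -> exists N, forall n, (N <= n)%nat -> hdist (u n) l < eps.

Lemma cauchy_seq_limit (u : nat -> X) : cauchy_seq u -> exists l, seq_limit u l.
Proof. exact (hcomplete X u). Qed.

Lemma closed_seq_limit (W : X -> Prop) (u : nat -> X) l :
  is_closed W -> (forall n, W (u n)) -> seq_limit u l -> W l.
Proof.
  intros Hcl Hu Hl. apply Hcl. intros eps He. destruct (Hl eps He) as [N HN].
  exists (u N). split; [apply Hu| apply HN, le_n].
Qed.

Lemma inv_succ_pos (n : nat) : 0 < / (INR n + 1).
Proof. apply Rinv_0_lt_compat. assert (H := pos_INR n). lra. Qed.

Lemma inv_succ_le (n N : nat) : (0 < N)%nat -> (N <= n)%nat -> / (INR n + 1) <= / INR N.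
Proof.
  intros H0 H. apply Rinv_le_contravar; [apply lt_0_INR; auto|].
  assert (H1 := le_INR _ _ H). lra.
Qed.

Lemma inv_succ_le_1 (n : nat) : / (INR n + 1) <= 1.
Proof.
  rewrite <- Rinv_1. apply Rinv_le_contravar; [lra|]. assert (H := pos_INR n). lra.
Qed.

Section NearestPoint.
Variables (W : X -> Prop) (z : X) (d : R).
Hypotheses (Hcv : convex W) (Hd0 : 0 <= d) (Hd : forall w, W w -> d <= hdist z w).

(* In a convex set, points that almost realise the distance [d] from [z] are
   close to each other: by the parallelogram law their midpoint would
   otherwise be closer than [d] to [z]. *)
Lemma almost_nearest_close (a b : X) ea eb : W a -> W b ->
  hinner (hsub z a) (hsub z a) <= d * d + ea ->
  hinner (hsub z b) (hsub z b) <= d * d + eb ->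
  hinner (hsub a b) (hsub a b) <= 2 * (ea + eb).
Proof.
  intros Ha Hb Hza Hzb.
  set (mid := hadd (hscal (1 / 2) a) (hscal (1 - 1 / 2) b)).
  assert (Hm : d <= hdist z mid) by (apply Hd, Hcv; auto; lra).
  assert (Hm2 : d * d <= hinner (hsub z mid) (hsub z mid)).
  { rewrite <- hnorm_sq. unfold hdist in Hm. nra. }
  replace (hsub a b) with (hsub (hsub z b) (hsub z a)) by vec_eq.
  replace (hsub z mid) with (hadd (hscal (1 / 2) (hsub z a)) (hscal (1 / 2) (hsub z b))) in Hm2
    by (unfold mid; apply vec_ext; intro; expand_inner; lra).
  set (p := hsub z a) in *. set (q := hsub z b) in *.
  expand_inner_in Hm2. expand_inner. rewrite (hinner_sym _ q p) in *. lra.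
Qed.

Lemma minimizing_seq_cauchy (u : nat -> X) : (forall n, W (u n)) ->
  (forall n, hdist z (u n) < d + / (INR n + 1)) -> cauchy_seq u.
Proof.
  intros HW Hu. set (k := 2 * d + 1).
  assert (Hsq : forall n, hinner (hsub z (u n)) (hsub z (u n)) <= d * d + k * / (INR n + 1)).
  { intro n. assert (Hl := Hd _ (HW n)). assert (Hr := Hu n).
    assert (He := inv_succ_pos n). assert (He1 := inv_succ_le_1 n).
    rewrite <- hnorm_sq. unfold hdist in *. unfold k.
    set (e := / (INR n + 1)) in *. set (h := hnorm (hsub z (u n))) in *. nra. }
  intros eps Heps.
  destruct (archimed_cor1 (eps * eps / (4 * k))) as [N [HN HN0]].
  { apply Rdiv_lt_0_compat; unfold k; nra. }
  exists N. intros i j Hi Hj. apply norm_lt_of_sq; [lra|].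
  eapply Rle_lt_trans; [apply (almost_nearest_close _ _ _ _ (HW i) (HW j) (Hsq i) (Hsq j))|].
  assert (Hi' := inv_succ_le i N HN0 Hi). assert (Hj' := inv_succ_le j N HN0 Hj).
  assert (Hk : 0 < k) by (unfold k; lra).
  apply Rle_lt_trans with (2 * (k * (2 * / INR N))); [nra|].
  replace (eps * eps) with (4 * k * (eps * eps / (4 * k))) by (field; lra). nra.
Qed.

End NearestPoint.

Lemma nearest_point_exists (W : X -> Prop) (w0 z : X) : is_closed W -> convex W -> W w0 ->
  exists p, W p /\ forall w, W w -> hdist z p <= hdist z w.
Proof.
  intros Hcl Hcv Hw0.
  (* [d] is the distance from [z] to [W], as a supremum of [- |z - w|] *)
  destruct (completeness (fun v => exists w, W w /\ v = - hdist z w)) as [m [Hub Hlub]].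
  { exists 0. intros v [w [_ ->]]. assert (H := hdist_nonneg z w). lra. }
  { exists (- hdist z w0). eauto. }
  set (d := - m).
  assert (Hd0 : 0 <= d).
  { assert (m <= 0); [|unfold d; lra]. apply Hlub. intros v [w [_ ->]].
    assert (H := hdist_nonneg z w). lra. }
  assert (Hd : forall w, W w -> d <= hdist z w).
  { intros w Hw. assert (- hdist z w <= m) by (apply Hub; eauto). unfold d. lra. }
  assert (Happrox : forall n : nat, exists w, W w /\ hdist z w < d + / (INR n + 1)).
  { intro n. apply NNPP. intro Hn. assert (Hm : m <= - (d + / (INR n + 1))).
    - apply Hlub. intros v [w [Hw ->]]. apply Ropp_le_contravar, Rnot_lt_le. intro Hlt. eauto.
    - assert (Hpos := inv_succ_pos n). unfold d in Hm. lra. }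
  apply choice in Happrox. destruct Happrox as [u Hu].
  destruct (cauchy_seq_limit u) as [l Hl].
  { apply (minimizing_seq_cauchy W z d Hcv Hd0 Hd); intro n; apply Hu. }
  exists l. split; [apply (closed_seq_limit W u); auto; apply Hu|].
  intros w Hw. eapply Rle_trans; [|apply (Hd w Hw)].
  apply Rnot_lt_le. intro Hlt.
  destruct (Hl ((hdist z l - d) / 2) ltac:(lra)) as [N1 HN1].
  destruct (archimed_cor1 ((hdist z l - d) / 2) ltac:(lra)) as [N2 [HN2 HN20]].
  assert (A1 := HN1 (max N1 N2) ltac:(lia)).
  assert (A2 := inv_succ_le (max N1 N2) N2 HN20 ltac:(lia)).
  assert (A3 := proj2 (Hu (max N1 N2))).
  assert (A4 := hdist_triangle z (u (max N1 N2)) l). lra.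
Qed.

(* The nearest point is characterised by the obtuse-angle condition
   [<z - p, w - p> <= 0]: moving from [p] towards [w] cannot get closer to [z]. *)
Lemma nearest_obtuse (W : X -> Prop) (z p : X) : convex W -> W p ->
  (forall w, W w -> hdist z p <= hdist z w) ->
  forall w, W w -> hinner (hsub z p) (hsub w p) <= 0.
Proof.
  intros Hcv Hp Hnear w Hw. apply Rnot_lt_le. intro Hbeta.
  set (a := hsub z p) in *. set (b := hsub w p) in *.
  set (beta := hinner a b) in *. set (B := hinner b b). assert (HB : 0 <= B) by apply hinner_pos.
  destruct (small_step (B + 1) beta 1 1) as [t [[Ht0 Ht1] [HtB _]]]; try lra.
  assert (Hy := Hnear _ (Hcv w p t Hw Hp ltac:(lra))).
  apply sq_le_of_norm in Hy. fold a in Hy.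
  replace (hsub z (hadd (hscal t w) (hscal (1 - t) p))) with (hsub a (hscal t b)) in Hy
    by (unfold a, b; vec_eq).
  expand_inner_in Hy. rewrite (hinner_sym _ b a) in Hy. fold beta B in Hy.
  assert (t * (t * B) < t * (2 * beta)) by (apply Rmult_lt_compat_l; lra). nra.
Qed.

Definition is_projection (W : X -> Prop) (P : X -> X) : Prop :=
  (forall z, W (P z)) /\ (forall z w, W w -> hinner (hsub z (P z)) (hsub w (P z)) <= 0).

Lemma projection_exists (W : X -> Prop) (w0 : X) : is_closed W -> convex W -> W w0 ->
  exists P, is_projection W P.
Proof.
  intros Hcl Hcv Hw0.
  assert (H : forall z, exists p, W p /\ forall w, W w -> hinner (hsub z p) (hsub w p) <= 0).
  { intro z. destruct (nearest_point_exists W w0 z Hcl Hcv Hw0) as [p [Hp Hnear]].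
    exists p. split; auto. apply nearest_obtuse; auto. }
  apply choice in H. destruct H as [P HP]. exists P. split; intro z; apply HP.
Qed.

End Projection.

Section ProjectionProperties.
Context {X : Hilbert}.
Variables (W : X -> Prop) (P : X -> X).
Hypothesis HP : is_projection W P.

Lemma proj_in z : W (P z).
Proof. apply HP. Qed.

Lemma proj_unique z p : W p -> (forall w, W w -> hinner (hsub z p) (hsub w p) <= 0) -> p = P z.
Proof.
  intros Hp Hobt. apply inner_self_sub_zero.
  assert (A := Hobt _ (proj_in z)). assert (B := proj2 HP z p Hp).
  assert (H := hinner_pos X (hsub p (P z))).
  set (q := P z) in *. expand_inner_in A. expand_inner_in B. expand_inner_in H. expand_inner.
  rewrite (hinner_sym _ q p), (hinner_sym _ z p), (hinner_sym _ z q) in *. lra.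
Qed.

Lemma proj_nearest z w : W w -> hdist z (P z) <= hdist z w.
Proof.
  intro Hw. assert (A := proj2 HP z w Hw). unfold hdist.
  apply norm_le_of_sq; [apply hnorm_nonneg|]. rewrite hnorm_sq.
  replace (hsub z w) with (hsub (hsub z (P z)) (hsub w (P z))) by vec_eq.
  set (a := hsub z (P z)) in *. set (b := hsub w (P z)) in *.
  expand_inner. rewrite (hinner_sym _ b a). assert (H := hinner_pos X b). lra.
Qed.

Lemma residual_nonexpansive x y : hdist (hsub x (P x)) (hsub y (P y)) <= hdist x y.
Proof.
  assert (A := proj2 HP x (P y) (proj_in y)). assert (B := proj2 HP y (P x) (proj_in x)).
  unfold hdist. apply norm_le_of_sq; [apply hnorm_nonneg|]. rewrite hnorm_sq.
  replace (hsub x y) with (hadd (hsub (hsub x (P x)) (hsub y (P y))) (hsub (P x) (P y)))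
    by vec_eq.
  set (a := hsub x (P x)) in *. set (b := hsub y (P y)) in *. set (v := hsub (P x) (P y)).
  replace (hsub (P y) (P x)) with (hscal (-1) v) in A by (unfold v; vec_eq).
  fold v in B. expand_inner_in A. expand_inner. assert (H := hinner_pos X v).
  rewrite (hinner_sym _ v a), (hinner_sym _ v b), (hinner_sym _ b a) in *. lra.
Qed.

Lemma dist_proj_lipschitz x y : hdist x (P x) <= hdist y (P y) + hdist x y.
Proof.
  assert (F := residual_nonexpansive x y). unfold hdist in *.
  replace (hsub x (P x)) with (hadd (hsub y (P y)) (hsub (hsub x (P x)) (hsub y (P y))))
    by vec_eq.
  eapply Rle_trans; [apply norm_triangle|]. lra.
Qed.

Lemma proj_ray x s : 0 <= s -> P (hadd x (hscal s (hsub x (P x)))) = P x.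
Proof.
  intro Hs. symmetry. apply proj_unique; [apply proj_in|]. intros w Hw.
  replace (hsub (hadd x (hscal s (hsub x (P x)))) (P x)) with (hscal (1 + s) (hsub x (P x)))
    by vec_eq.
  rewrite hinner_scal_l. assert (A := proj2 HP x w Hw).
  apply Rmult_le_reg_l with (/ (1 + s)); [apply Rinv_0_lt_compat; lra|].
  rewrite Rmult_0_r, <- Rmult_assoc, Rinv_l, Rmult_1_l by lra. exact A.
Qed.

(* The squared distance [f q = |q - P q|^2] is Frechet differentiable with
   gradient [2 (q - P q)]: comparing [f q] with [|q - P p|^2] and [f p] with
   [|p - P q|^2] gives [|f q - f p - <2 (p - P p), q - p>| <= 3 |q - p|^2]. *)
Lemma sq_dist_frechet p :
  frechet_grad (fun q => hinner (hsub q (P q)) (hsub q (P q))) (hscal 2 (hsub p (P p))) p.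
Proof.
  intros eps He. exists (eps / 3). split; [lra|]. intros q Hq.
  assert (Up := sq_le_of_norm _ _ (proj_nearest q (P p) (proj_in p))).
  assert (Lo := sq_le_of_norm _ _ (proj_nearest p (P q) (proj_in q))).
  assert (Fi := residual_nonexpansive q p).
  unfold hdist in *.
  set (a := hsub p (P p)) in *. set (a' := hsub q (P q)) in *. set (h := hsub q p) in *.
  replace (hsub q (P p)) with (hadd a h) in Up by (unfold a, h; vec_eq).
  replace (hsub p (P q)) with (hsub a' h) in Lo by (unfold a', h; vec_eq).
  assert (Cs : Rabs (hinner (hsub a' a) h) <= hinner h h).
  { rewrite <- hnorm_sq. eapply Rle_trans; [apply cauchy_schwarz|].
    apply Rmult_le_compat_r; [apply hnorm_nonneg| exact Fi]. }
  assert (Hh := hnorm_nonneg h). assert (Hhh := hnorm_sq h).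
  assert (Hh3 : hnorm h * hnorm h <= eps / 3 * hnorm h) by (apply Rmult_le_compat_r; lra).
  apply Rabs_le_inv in Cs.
  expand_inner_in Up. expand_inner_in Lo. expand_inner_in Cs. expand_inner.
  rewrite (hinner_sym _ h a), (hinner_sym _ h a') in *.
  apply Rabs_le. split; nra.
Qed.

End ProjectionProperties.

Definition parallel_body {X : Hilbert} (P : X -> X) (r : R) : X -> Prop :=
  fun z => hdist z (P z) <= r.
Definition body_normal {X : Hilbert} (P : X -> X) (r : R) (x : X) : X :=
  hscal (/ r) (hsub x (P x)).
Definition body_fun {X : Hilbert} (P : X -> X) (r : R) (q : X) : R :=
  hinner (hsub q (P q)) (hsub q (P q)) - r * r.
Definition body_grad {X : Hilbert} (P : X -> X) (q : X) : X := hscal 2 (hsub q (P q)).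

Section ParallelBody.
Context {X : Hilbert}.
Variables (W : X -> Prop) (P : X -> X) (r : R).
Hypotheses (HP : is_projection W P) (Hr : 0 < r).

Lemma parallel_body_closed : is_closed (parallel_body P r).
Proof.
  intros x Hx. unfold parallel_body. apply Rnot_lt_le. intro Hlt.
  destruct (Hx (hdist x (P x) - r) ltac:(lra)) as [y [Hy Hd]].
  assert (F := dist_proj_lipschitz W P HP x y). rewrite hdist_sym in Hd.
  unfold parallel_body in Hy. lra.
Qed.

Lemma parallel_body_convex : convex W -> convex (parallel_body P r).
Proof.
  intros Hcv x y t Hx Hy Ht. unfold parallel_body in *.
  set (w := hadd (hscal t (P x)) (hscal (1 - t) (P y))).
  assert (Hw : W w) by (apply Hcv; auto; apply (proj_in W P HP)).
  eapply Rle_trans; [apply (proj_nearest W P HP _ w Hw)|].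
  unfold hdist. replace (hsub (hadd (hscal t x) (hscal (1 - t) y)) w)
    with (hadd (hscal t (hsub x (P x))) (hscal (1 - t) (hsub y (P y)))) by (unfold w; vec_eq).
  eapply Rle_trans; [apply norm_convex_comb; auto|]. fold (hdist x (P x)) (hdist y (P y)). nra.
Qed.

Lemma parallel_body_interior z : hdist z (P z) < r -> interior (parallel_body P r) z.
Proof.
  intro Hz. exists (r - hdist z (P z)). split; [lra|]. intros y Hy. unfold parallel_body.
  assert (F := dist_proj_lipschitz W P HP y z). lra.
Qed.

Lemma body_normal_unit x : hdist x (P x) = r -> hnorm (body_normal P r x) = 1.
Proof.
  intro Hx. unfold body_normal. rewrite norm_scal_nonneg by (apply Rlt_le, Rinv_0_lt_compat; lra).
  fold (hdist x (P x)). rewrite Hx. field. lra.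
Qed.

Lemma dist_along_normal x t : hdist x (P x) = r -> 0 <= t ->
  hdist (hadd x (hscal t (body_normal P r x))) (P (hadd x (hscal t (body_normal P r x)))) = r + t.
Proof.
  intros Hx Ht. unfold body_normal.
  assert (Hs : 0 <= t / r) by (unfold Rdiv; apply Rmult_le_pos; [lra| apply Rlt_le, Rinv_0_lt_compat; lra]).
  replace (hadd x (hscal t (hscal (/ r) (hsub x (P x))))) with (hadd x (hscal (t / r) (hsub x (P x))))
    by vec_eq.
  rewrite (proj_ray W P HP x _ Hs). unfold hdist.
  replace (hsub (hadd x (hscal (t / r) (hsub x (P x)))) (P x))
    with (hscal (1 + t / r) (hsub x (P x))) by vec_eq.
  rewrite norm_scal_nonneg by lra. fold (hdist x (P x)). rewrite Hx. field. lra.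
Qed.

Lemma parallel_body_boundary x : boundary (parallel_body P r) x <-> hdist x (P x) = r.
Proof.
  split.
  - intro Hb. assert (Hx := boundary_in _ x parallel_body_closed Hb).
    destruct Hx as [Hlt|]; auto. exfalso. apply (proj2 Hb), parallel_body_interior, Hlt.
  - intro Hx. split; [apply closure_self; unfold parallel_body; lra|].
    intros [e [He Hint]].
    assert (H := Hint (hadd x (hscal (e / 2) (body_normal P r x)))).
    unfold parallel_body in H. rewrite dist_along_normal in H by (auto; lra).
    enough (hdist (hadd x (hscal (e / 2) (body_normal P r x))) x < e) by (specialize (H H0); lra).
    unfold hdist. replace (hsub (hadd x (hscal (e / 2) (body_normal P r x))) x)
      with (hscal (e / 2) (body_normal P r x)) by vec_eq.
    rewrite norm_scal_nonneg, body_normal_unit by (auto; lra). lra.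
Qed.

Lemma parallel_body_chart x : boundary (parallel_body P r) x ->
  local_chart (boundary (parallel_body P r)) x 1 (body_fun P r) (body_grad P).
Proof.
  intro Hb. apply parallel_body_boundary in Hb. split; [lra| split; [| split]].
  - intros q _. split.
    + intros eps He. destruct (sq_dist_frechet W P HP q eps He) as [d [Hd Hfr]].
      exists d. split; auto. intros q' Hq'. specialize (Hfr q' Hq').
      unfold body_fun. replace (hinner (hsub q' (P q')) (hsub q' (P q')) - r * r -
        (hinner (hsub q (P q)) (hsub q (P q)) - r * r)) with
        (hinner (hsub q' (P q')) (hsub q' (P q')) - hinner (hsub q (P q)) (hsub q (P q))) by ring.
      exact Hfr.
    + intros eps He. exists (eps / 2). split; [lra|]. intros q' Hq'.
      unfold hdist, body_grad.
      replace (hsub (hscal 2 (hsub q' (P q'))) (hscal 2 (hsub q (P q))))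
        with (hscal 2 (hsub (hsub q' (P q')) (hsub q (P q)))) by vec_eq.
      rewrite norm_scal_nonneg by lra. fold (hdist (hsub q' (P q')) (hsub q (P q))).
      assert (F := residual_nonexpansive W P HP q' q). lra.
  - intro E. assert (H : hnorm (body_grad P x) = 2 * r).
    { unfold body_grad. rewrite norm_scal_nonneg by lra. fold (hdist x (P x)). rewrite Hb. ring. }
    rewrite E, norm_hzero in H. lra.
  - intros q _. rewrite parallel_body_boundary. unfold body_fun.
    rewrite <- hnorm_sq. fold (hdist q (P q)).
    assert (Hq := hdist_nonneg q (P q)). split; intro H; [rewrite H; ring| nra].
Qed.

Lemma body_normal_outer x : boundary (parallel_body P r) x ->
  outer_unit_normal (parallel_body P r) x (body_normal P r x).
Proof.
  intro Hb. assert (Hx := proj1 (parallel_body_boundary x) Hb).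
  split; [apply body_normal_unit, Hx| split].
  - exists 1, (body_fun P r), (body_grad P). split; [apply parallel_body_chart, Hb|]. left.
    unfold body_grad, body_normal. rewrite norm_scal_nonneg by lra.
    fold (hdist x (P x)). rewrite Hx. apply vec_ext. intro. expand_inner. field. lra.
  - exists 1. split; [lra|]. intros t Ht Hin. unfold parallel_body in Hin.
    rewrite dist_along_normal in Hin by (auto; lra). lra.
Qed.

(* Every unit normal field of the parallel body is [body_normal], because
   the ball of radius [r] around [P x] lies in the body and is tangent at [x]. *)
Lemma body_normal_field_unique NV : convex W -> normal_field (parallel_body P r) NV ->
  forall x, boundary (parallel_body P r) x -> NV x = body_normal P r x.
Proof.
  intros Hcv Hnf x Hb. assert (Hx := proj1 (parallel_body_boundary x) Hb).
  apply (normal_unique_of_inner_ball (parallel_body P r) x _ _ r); auto.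
  - apply (Hnf x Hb).
  - apply body_normal_unit, Hx.
  - apply supporting; auto; [apply parallel_body_convex, Hcv| apply parallel_body_closed].
  - intros z Hz. replace (hsub x (hscal r (body_normal P r x))) with (P x) in Hz
      by (unfold body_normal; apply vec_ext; intro; expand_inner; field; lra).
    unfold parallel_body. assert (H := proj_nearest W P HP z (P x) (proj_in W P HP x)). lra.
Qed.

Lemma body_normal_lipschitz (S : X -> Prop) : lipschitz_on S (body_normal P r) (/ r).
Proof.
  intros x y _ _. unfold hdist, body_normal.
  replace (hsub (hscal (/ r) (hsub x (P x))) (hscal (/ r) (hsub y (P y))))
    with (hscal (/ r) (hsub (hsub x (P x)) (hsub y (P y)))) by vec_eq.
  assert (Hinv : 0 < / r) by (apply Rinv_0_lt_compat; lra).
  rewrite norm_scal_nonneg by lra. apply Rmult_le_compat_l; [lra|].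
  apply (residual_nonexpansive W P HP).
Qed.

Lemma parallel_body_C11 w0 : convex W -> W w0 ->
  C11_body (parallel_body P r) /\
  forall NV, normal_field (parallel_body P r) NV ->
    lipschitz_on (boundary (parallel_body P r)) NV (/ r).
Proof.
  intros Hcv Hw0. split.
  - split; [split; [| split]| split].
    + apply parallel_body_convex, Hcv.
    + apply parallel_body_closed.
    + exists w0. apply parallel_body_interior.
      assert (H := proj_nearest W P HP w0 w0 Hw0). rewrite hdist_self in H. lra.
    + intros p Hp. exists 1, (body_fun P r), (body_grad P). apply parallel_body_chart, Hp.
    + exists (body_normal P r), (/ r). split; [apply Rinv_0_lt_compat; lra| split].
      * intros x Hb. apply body_normal_outer, Hb.
      * apply body_normal_lipschitz.
  - intros NV Hnf x y Hx Hy.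
    rewrite (body_normal_field_unique NV Hcv Hnf x Hx), (body_normal_field_unique NV Hcv Hnf y Hy).
    apply (body_normal_lipschitz (boundary (parallel_body P r))); auto.
Qed.

End ParallelBody.

Section Construction.
Context {X : Hilbert}.

Definition closed_convex_hull (A : X -> Prop) : X -> Prop :=
  fun w => forall K, is_closed K -> convex K -> (forall a, A a -> K a) -> K w.

Lemma hull_closed A : is_closed (closed_convex_hull A).
Proof.
  intros w Hw K HK HKc HA. apply HK. intros eps He.
  destruct (Hw eps He) as [y [Hy Hd]]. exists y. split; [apply Hy| exact Hd]; auto.
Qed.

Lemma hull_convex A : convex (closed_convex_hull A).
Proof. intros a b t Ha Hb Ht K HK HKc HA. apply HKc; [apply Ha| apply Hb|]; auto. Qed.

Lemma hull_contains A a : A a -> closed_convex_hull A a.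
Proof. intros Ha K _ _ HA. auto. Qed.

Lemma halfspace_closed (n c : X) : is_closed (fun w => hinner n (hsub w c) <= 0).
Proof.
  intros w Hw. apply Rnot_lt_le. intro Hlt.
  destruct (Hw (hinner n (hsub w c) / (hnorm n + 1))) as [y [Hy Hd]].
  { apply Rdiv_lt_0_compat; [lra|]. assert (H := hnorm_nonneg n). lra. }
  assert (CS := cauchy_schwarz_le n (hsub w y)). fold (hdist w y) in CS. rewrite hdist_sym in CS.
  replace (hinner n (hsub w c)) with (hinner n (hsub y c) + hinner n (hsub w y)) in *
    by (expand_inner; ring).
  assert (Hn := hnorm_nonneg n). assert (Hdy := hdist_nonneg y w).
  apply Rmult_lt_compat_r with (r := hnorm n + 1) in Hd; [|lra].
  unfold Rdiv in Hd. rewrite Rmult_assoc, Rinv_l, Rmult_1_r in Hd by lra. nra.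
Qed.

Lemma halfspace_convex (n c : X) : convex (fun w => hinner n (hsub w c) <= 0).
Proof.
  intros a b t Ha Hb Ht. simpl in *.
  replace (hinner n (hsub (hadd (hscal t a) (hscal (1 - t) b)) c))
    with (t * hinner n (hsub a c) + (1 - t) * hinner n (hsub b c)) by (expand_inner; ring).
  nra.
Qed.

Lemma closed_ball_closed M : is_closed (fun w : X => hnorm w <= M).
Proof.
  intros w Hw. apply Rnot_lt_le. intro Hlt.
  destruct (Hw (hnorm w - M) ltac:(lra)) as [y [Hy Hd]].
  assert (T := norm_le_dist w y). rewrite hdist_sym in Hd. simpl in Hy. lra.
Qed.

Lemma closed_ball_convex M : convex (fun w : X => hnorm w <= M).
Proof.
  intros a b t Ha Hb Ht. simpl in *.
  eapply Rle_trans; [apply norm_convex_comb; auto|]. nra.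
Qed.

Lemma hull_parallel_body (A : X -> Prop) a0 r : A a0 -> 0 < r ->
  exists P, is_projection (closed_convex_hull A) P /\
    C11_body (parallel_body P r) /\
    (forall NV, normal_field (parallel_body P r) NV ->
       lipschitz_on (boundary (parallel_body P r)) NV (/ r)) /\
    ((exists M, forall a, A a -> hnorm a <= M) -> hbounded (parallel_body P r)).
Proof.
  intros Ha0 Hr.
  destruct (projection_exists _ a0 (hull_closed A) (hull_convex A) (hull_contains A a0 Ha0))
    as [P HP].
  destruct (parallel_body_C11 _ P r HP Hr a0 (hull_convex A) (hull_contains A a0 Ha0))
    as [H11 Hlip].
  exists P. split; [auto| split; [auto| split; [auto|]]].
  intros [M HM]. exists (M + r). intros z Hz.
  assert (HPz : hnorm (P z) <= M).
  { apply (proj_in _ P HP z (fun w => hnorm w <= M));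
      [apply closed_ball_closed| apply closed_ball_convex| exact HM]. }
  assert (T := norm_le_dist z (P z)). unfold parallel_body in Hz. lra.
Qed.

(* The centre [y - r N y] of the ball of radius [r] tangent at [y]. *)
Definition centre (N : X -> X) (r : R) (y : X) : X := hsub y (hscal r (N y)).
Definition centres (C : X -> Prop) (N : X -> X) (r : R) : X -> Prop :=
  fun w => exists y, C y /\ w = centre N r y.

Section Centres.
Variables (C : X -> Prop) (N : X -> X) (r : R).
Hypotheses (HN : forall x, C x -> hnorm (N x) = 1) (Hr : 0 < r).

(* Inequality (2) says exactly that all centres lie in the half-space
   supported at [centre x] with normal [N x]. *)
Lemma centres_in_halfspace x y :
  hinner (N x) (hsub x y) >= r / 2 * (hnorm (hsub (N x) (N y))) ^ 2 -> C x -> C y ->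
  hinner (N x) (hsub (centre N r y) (centre N r x)) <= 0.
Proof.
  intros I Hx Hy. rewrite hnorm_pow2 in I.
  unfold centre. expand_inner_in I. expand_inner.
  rewrite (unit_inner _ (HN x Hx)), (unit_inner _ (HN y Hy)) in *.
  rewrite (hinner_sym _ (N y) (N x)) in I. lra.
Qed.

Lemma proj_onto_centre P :
  (forall x y, C x -> C y ->
     hinner (N y) (hsub y x) >= r / 2 * (hnorm (hsub (N y) (N x))) ^ 2) ->
  is_projection (closed_convex_hull (centres C N r)) P -> forall x, C x -> P x = centre N r x.
Proof.
  intros Hin HP x Hx. symmetry. apply (proj_unique _ P HP).
  { apply hull_contains. exists x. auto. }
  intros w Hw. replace (hsub x (centre N r x)) with (hscal r (N x)) by (unfold centre; vec_eq).
  rewrite hinner_scal_l.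
  enough (H : hinner (N x) (hsub w (centre N r x)) <= 0) by nra.
  apply (Hw (fun w => hinner (N x) (hsub w (centre N r x)) <= 0));
    [apply halfspace_closed| apply halfspace_convex|].
  intros a [y [Hy ->]]. apply centres_in_halfspace; auto.
Qed.

Lemma centre_distance_normal P x : C x -> P x = centre N r x ->
  hdist x (P x) = r /\ body_normal P r x = N x.
Proof.
  intros Hx HPx. unfold hdist, body_normal. rewrite HPx. unfold centre.
  replace (hsub x (hsub x (hscal r (N x)))) with (hscal r (N x)) by vec_eq.
  rewrite norm_scal_nonneg, HN by (auto; lra). split; [ring|].
  apply vec_ext. intro. expand_inner. field. lra.
Qed.

Lemma centres_bounded : hbounded C -> exists M, forall a, centres C N r a -> hnorm a <= M.
Proof.
  intros [M HM]. exists (M + r). intros a [y [Hy ->]].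
  unfold centre, hsub. eapply Rle_trans; [apply norm_triangle|].
  rewrite norm_opp, norm_scal_nonneg, HN by (auto; lra). assert (H := HM y Hy). lra.
Qed.

End Centres.

(* Sufficiency, (2) => (1), with the refinements: [V] is the parallel body of
   radius [r] of the closed convex hull of the centres (of any one ball of
   radius [r] if [C] is empty). *)
Lemma sufficiency (C : X -> Prop) (N : X -> X) (HN : forall x, C x -> hnorm (N x) = 1) r :
  0 < r ->
  (forall x y, C x -> C y ->
     hinner (N y) (hsub y x) >= r / 2 * (hnorm (hsub (N y) (N x))) ^ 2) ->
  exists V : X -> Prop, C11_body V /\
    (forall x, C x -> boundary V x /\ outer_unit_normal V x (N x)) /\
    (forall NV, normal_field V NV -> lipschitz_on (boundary V) NV (/ r)) /\
    (hbounded C -> hbounded V).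
Proof.
  intros Hr Hin.
  destruct (classic (exists x0, C x0)) as [[x0 Hx0]|Hempty].
  - destruct (hull_parallel_body (centres C N r) (centre N r x0) r) as [P [HP [H11 [Hlip Hbd]]]];
      [exists x0; auto| auto|].
    exists (parallel_body P r). split; [auto| split; [| split; [auto|]]].
    + intros x Hx.
      destruct (centre_distance_normal C N r HN Hr P x Hx (proj_onto_centre C N r HN Hr P Hin HP x Hx))
        as [Hdist Hnormal].
      assert (Hb := proj2 (parallel_body_boundary _ P r HP Hr x) Hdist).
      split; auto. rewrite <- Hnormal. apply (body_normal_outer _ P r HP Hr), Hb.
    + intro HC. apply Hbd. apply (centres_bounded C N r HN Hr HC).
  - destruct (hull_parallel_body (fun w => w = hzero) hzero r eq_refl Hr)
      as [P [HP [H11 [Hlip Hbd]]]].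
    exists (parallel_body P r). split; [auto| split; [| split; [auto|]]].
    + intros x Hx. exfalso. eauto.
    + intros _. apply Hbd. exists 0. intros a ->. rewrite norm_hzero. lra.
Qed.

End Construction.

Theorem theorem1p3 (X : Hilbert) (C : X -> Prop) (N : X -> X)
  (HN : forall x, C x -> hnorm (N x) = 1) :
  ((exists V : X -> Prop, C11_body V /\
      (forall x, C x -> boundary V x /\ outer_unit_normal V x (N x)))
   <->
   (exists r, 0 < r /\ forall x y, C x -> C y ->
      hinner (N y) (hsub y x) >= r / 2 * (hnorm (hsub (N y) (N x))) ^ 2))
  /\
  (forall r, 0 < r ->
     (forall x y, C x -> C y ->
        hinner (N y) (hsub y x) >= r / 2 * (hnorm (hsub (N y) (N x))) ^ 2) ->
     exists V : X -> Prop, C11_body V /\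
       (forall x, C x -> boundary V x /\ outer_unit_normal V x (N x)) /\
       (forall NV, normal_field V NV -> lipschitz_on (boundary V) NV (/ r)) /\
       (hbounded C -> hbounded V)).
Proof.
  split; [split|].
  - apply necessity.
  - intros [r [Hr Hin]].
    destruct (sufficiency C N HN r Hr Hin) as [V [H11 [HC _]]]. eauto.
  - intros r Hr Hin. apply sufficiency; auto.
Qed.
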